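(* Let $\mathcal{Q}\subseteq 2^E$ ($E$ finite) be homogeneous, i.e. all members of $\mathcal{Q}$ have the same cardinality. If $\mathcal{Q}$ is weakly Rayleigh then $\mathcal{Q}$ is the set of bases of a matroid on $E$.
   Context: For $\omega:2^E\to[0,\infty)$ not identically zero, $Z(\omega;\mathbf{y})=\sum_S\omega(S)\prod_{e\in S}y_e$; with subscripts denoting partial derivatives, $Z$ is Rayleigh if $Z_eZ_f-Z_{ef}Z\ge0$ for all distinct $e,f$ and all positive $\mathbf{y}$. $\mathcal{Q}$ is weakly Rayleigh if some $\omega\ge0$ with $\{S:\omega(S)>0\}=\mathcal{Q}$ has $Z(\omega;\mathbf{y})$ Rayleigh. *)

From mathcomp Require Import all_boot all_algebra.
From mathcomp Require Import Rstruct.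
From Stdlib Require Import Reals.
From mathcomp Require Import mpoly.

Set Implicit Arguments.
Unset Strict Implicit.
Unset Printing Implicit Defensive.

Import GRing.Theory Num.Theory.
Local Open Scope ring_scope.

(* The ground set E is a finite type; the variable y_e is 'X_(enum_rank e)
   in the polynomial ring R[y_e : e in E] = {mpoly R[#|E|]}. *)

Definition Zpoly (E : finType) (omega : {set E} -> R) : {mpoly R[#|E|]} :=
  \sum_(S : {set E}) omega S *: \prod_(e in S) 'X_(enum_rank e).

Definition Rayleigh (E : finType) (Z : {mpoly R[#|E|]}) : Prop :=
  forall (e f : E), e != f ->
  forall y : 'I_#|E| -> R, (forall i, 0 < y i) ->
    0 <= (Z^`M(enum_rank e)).@[y] * (Z^`M(enum_rank f)).@[y]
         - (Z^`M(enum_rank e)^`M(enum_rank f)).@[y] * Z.@[y].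

Definition weakly_Rayleigh (E : finType) (Q : {set {set E}}) : Prop :=
  exists omega : {set E} -> R,
    [/\ forall S, 0 <= omega S,
        exists S, omega S != 0,
        forall S, (0 < omega S) <-> (S \in Q)
      & Rayleigh (Zpoly omega)].

Definition homogeneous (E : finType) (Q : {set {set E}}) : Prop :=
  forall S T, S \in Q -> T \in Q -> #|S| = #|T|.

Definition matroid_bases (E : finType) (Q : {set {set E}}) : Prop :=
  Q != set0 /\
  forall B1 B2, B1 \in Q -> B2 \in Q ->
  forall x, x \in B1 :\: B2 ->
  exists2 y, y \in B2 :\: B1 & (y |: (B1 :\ x)) \in Q.

(* Basis exchange is proved by induction on #|B1 :\: B2|.  If x is the only
   element of B1 :\: B2, homogeneity makes B2 = y |: (B1 :\ x) for the only y in
   B2 :\: B1.  Otherwise pick x' <> x in B1 :\: B2 and weigh each element g by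
   w g = [g in B1 :|: B2] + [g in B1 :&: B2]: among the equicardinal members of
   Q, the maximal weight is attained exactly by the S with
   B1 :&: B2 \subset S \subset B1 :|: B2, B1 and B2 among them.  Evaluating the
   Rayleigh inequality for x, x' at y_g = t^(w g) with t large, the leading
   terms force a top-weight S containing x' but not x.  Then B1 :\: S is
   strictly smaller than B1 :\: B2, and the exchange element for B1, S given
   by induction lies in B2. *)

From mathcomp Require Import all_boot all_algebra.
From mathcomp Require Import Rstruct.
From Stdlib Require Import Reals.
From mathcomp Require Import mpoly.
From mathcomp Require Import ring lra.

Set Implicit Arguments.
Unset Strict Implicit.
Unset Printing Implicit Defensive.

Import order.Order.TTheory GRing.Theory Num.Theory.
Local Open Scope ring_scope.

Lemma mderivXU n (i j : 'I_n) : ('X_j : {mpoly R[n]})^`M(i) = (i == j)%:R.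
Proof.
rewrite mderivX mnm1E eq_sym; case: eqP => [->|_]; last by rewrite scale0r.
by rewrite scale1r -{1}[U_(j)%MM]add0m addmK mpolyX0.
Qed.

Section ZpolyCalculus.

Variables (E : finType) (omega : {set E} -> R).

Local Notation X e := ('X_(enum_rank e) : {mpoly R[#|E|]}).

Definition Zsum (y : E -> R) (P : pred {set E}) : R :=
  \sum_(S | P S) omega S * \prod_(g in S) y g.

Lemma ZsumID (y : E -> R) (P Q : pred {set E}) :
  Zsum y P = Zsum y (fun S => P S && Q S) + Zsum y (fun S => P S && ~~ Q S).
Proof. exact: bigID. Qed.

Lemma mderiv_prodX (S : {set E}) e :
  (\prod_(g in S) X g)^`M(enum_rank e) = (e \in S)%:R *: \prod_(g in S :\ e) X g.
Proof.
have nil_d (A : {set E}) : e \notin A -> (\prod_(g in A) X g)^`M(enum_rank e) = 0.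
  move=> eA; apply: (big_ind (fun p : {mpoly R[#|E|]} => p^`M(enum_rank e) = 0)).
  - by rewrite -mpolyC1 mderivC.
  - by move=> p q dp dq; rewrite mderivM dp dq mul0r mulr0 addr0.
  - move=> g gA; rewrite mderivXU (inj_eq enum_rank_inj).
    by case: eqP gA => // <-; rewrite (negPf eA).
have [eS|eS] := boolP (e \in S); last by rewrite nil_d // scale0r.
rewrite (big_setD1 e eS) mderivM mderivXU eqxx mul1r scale1r.
by rewrite nil_d ?setD11 // mulr0 addr0.
Qed.

Lemma meval_prodX (S : {set E}) (y : E -> R) :
  (\prod_(g in S) X g).@[y \o enum_val] = \prod_(g in S) y g.
Proof.
rewrite (big_morph _ (mevalM _) (meval1 _)); apply: eq_bigr => g _.
by rewrite mevalXU /= enum_rankK.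
Qed.

Lemma mul_meval_mderiv_prodX (S : {set E}) (y : E -> R) e :
  y e * ((\prod_(g in S) X g)^`M(enum_rank e)).@[y \o enum_val] =
  (e \in S)%:R * \prod_(g in S) y g.
Proof.
rewrite mderiv_prodX mevalZ meval_prodX.
have [eS|_] := boolP (e \in S); last by rewrite !mul0r mulr0.
by rewrite (big_setD1 e eS) !mul1r.
Qed.

Lemma meval_Zpoly (y : E -> R) : (Zpoly omega).@[y \o enum_val] = Zsum y predT.
Proof.
rewrite (big_morph _ (mevalD _) (meval0 _)); apply: eq_bigr => S _.
by rewrite mevalZ meval_prodX.
Qed.

Lemma mul_meval_Zpoly_mderiv (y : E -> R) e :
  y e * ((Zpoly omega)^`M(enum_rank e)).@[y \o enum_val] =
  Zsum y (fun S => e \in S).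
Proof.
rewrite /Zpoly (big_morph _ (mderivD _) (mderiv0 _ _)).
rewrite (big_morph _ (mevalD _) (meval0 _)) mulr_sumr /Zsum [RHS]big_mkcond.
apply: eq_bigr => S _.
rewrite mderivZ mevalZ mulrCA mul_meval_mderiv_prodX.
by case: (e \in S); rewrite ?mul1r ?mul0r ?mulr0.
Qed.

Lemma mul_meval_Zpoly_mderiv2 (y : E -> R) e f : e != f ->
  y e * y f * ((Zpoly omega)^`M(enum_rank e)^`M(enum_rank f)).@[y \o enum_val] =
  Zsum y (fun S => (e \in S) && (f \in S)).
Proof.
move=> nef; rewrite /Zpoly (big_morph _ (mderivD (enum_rank e)) (mderiv0 _ _)).
rewrite (big_morph _ (mderivD (enum_rank f)) (mderiv0 _ _)).
rewrite (big_morph _ (mevalD _) (meval0 _)) mulr_sumr /Zsum [RHS]big_mkcond.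
apply: eq_bigr => S _.
rewrite !mderivZ mderiv_prodX mderivZ !mevalZ.
set D := (_ ^`M(_)).@[_].
have -> : y e * y f * (omega S * ((e \in S)%:R * D)) =
    omega S * (e \in S)%:R * (y e * (y f * D)) by ring.
rewrite /D mul_meval_mderiv_prodX in_setD1 eq_sym (negPf nef) /=.
have [eS|_] := boolP (e \in S); last by rewrite !(mul0r, mulr0).
rewrite mulr1 mulrCA (big_setD1 e eS).
by case: (f \in S); rewrite /= ?(mul0r, mulr0) // mul1r mulrCA.
Qed.

End ZpolyCalculus.

Definition weight (E : finType) (w : E -> nat) (S : {set E}) : nat :=
  \sum_(g in S) w g.

Lemma prod_exp_weight (E : finType) (t : R) (w : E -> nat) (S : {set E}) :
  \prod_(g in S) t ^+ w g = t ^+ weight w S.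
Proof. exact: prodrXr. Qed.

Section RayleighInequalities.

Variables (E : finType) (omega : {set E} -> R).
Hypothesis omega_ge0 : forall S, 0 <= omega S.
Hypothesis Rayleigh_Z : Rayleigh (Zpoly omega).

Lemma Rayleigh_correlation (y : E -> R) e f : e != f -> (forall g, 0 < y g) ->
  Zsum omega y (fun S => (e \in S) && (f \in S)) * Zsum omega y (fun S => e \notin S) <=
  Zsum omega y (fun S => e \in S) * Zsum omega y (fun S => (f \in S) && (e \notin S)).
Proof.
move=> nef y_gt0.
have yef_gt0 : 0 < y e * y f by rewrite mulr_gt0.
have := Rayleigh_Z nef (fun i => y_gt0 (enum_val i)).
rewrite -(pmulr_rge0 _ yef_gt0).
set Ze := _.@[_]; set Zf := _.@[_]; set Zef := _.@[_]; set Z := _.@[_].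
have -> : y e * y f * (Ze * Zf - Zef * Z) =
    (y e * Ze) * (y f * Zf) - (y e * y f * Zef) * Z by ring.
rewrite /Ze /Zf /Zef /Z !mul_meval_Zpoly_mderiv mul_meval_Zpoly_mderiv2 // meval_Zpoly.
rewrite (ZsumID _ _ (fun S => f \in S) (fun S => e \in S)).
rewrite (ZsumID _ _ predT (fun S => e \in S)) /=.
have -> : Zsum omega y (fun S => (f \in S) && (e \in S)) =
    Zsum omega y (fun S => (e \in S) && (f \in S)).
  by apply: eq_bigl => S; rewrite andbC.
lra.
Qed.

Lemma Zsum_ge0 (y : E -> R) P : (forall g, 0 <= y g) -> 0 <= Zsum omega y P.
Proof. by move=> y_ge0; apply: sumr_ge0 => S _; rewrite mulr_ge0 ?prodr_ge0. Qed.

Lemma Zsum_ge_term (y : E -> R) (P : pred {set E}) B : (forall g, 0 <= y g) -> P B ->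
  omega B * \prod_(g in B) y g <= Zsum omega y P.
Proof.
move=> y_ge0 PB; rewrite /Zsum (bigD1 B) //= lerDl.
by apply: sumr_ge0 => S _; rewrite mulr_ge0 ?prodr_ge0.
Qed.

Lemma Zsum_exp_le (t : R) (w : E -> nat) (P : pred {set E}) (k M : nat) : 1 <= t ->
  (forall S, P S -> 0 < omega S -> (weight w S + k <= M)%nat) ->
  t ^+ k * Zsum omega (fun g => t ^+ w g) P <= (\sum_S omega S) * t ^+ M.
Proof.
move=> t_ge1 le_wM; have t_ge0 : 0 <= t := le_trans ler01 t_ge1.
rewrite /Zsum big_mkcond mulr_sumr mulr_suml; apply: ler_sum => S _.
case: ifP => PS; last by rewrite mulr0 mulr_ge0 ?exprn_ge0.
have := omega_ge0 S; rewrite le_eqVlt => /predU1P[<-|omega_gt0].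
  by rewrite !(mul0r, mulr0).
rewrite prod_exp_weight mulrCA -exprD ler_wpM2l ?ler_weXn2l // addnC.
exact: le_wM.
Qed.

(* With p = omega B1 * omega B2, W = \sum_S omega S and y = t^w, the top-level
   sets B1, B2 and the strict bound for sets with f but not e give
   p t^(2M+1) <= t Zsum_{e,f} Zsum_{~e} <= Zsum_e (t Zsum_{f,~e}) <= W^2 t^(2M),
   the middle step being Rayleigh_correlation; t is chosen with p t > W^2. *)
Lemma Rayleigh_top_weight_contra (w : E -> nat) (B1 B2 : {set E}) e f :
  e != f -> 0 < omega B1 -> 0 < omega B2 -> e \in B1 -> f \in B1 -> e \notin B2 ->
  (forall S, 0 < omega S -> (weight w S <= weight w B1)%nat) ->
  weight w B2 = weight w B1 ->
  ~ (forall S, 0 < omega S -> f \in S -> e \notin S -> (weight w S < weight w B1)%nat).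
Proof.
move=> nef B1_gt0 B2_gt0 eB1 fB1 eB2 le_top B2_top lt_top; set M := weight w B1.
pose W := \sum_S omega S; pose p := omega B1 * omega B2.
have p_gt0 : 0 < p by rewrite mulr_gt0.
pose t := W ^+ 2 / p + 1.
have t_ge1 : 1 <= t by rewrite lerDr divr_ge0 ?sqr_ge0 ?ltW.
have t_gt0 : 0 < t := lt_le_trans ltr01 t_ge1.
have pt : p * t = W ^+ 2 + p by rewrite mulrDr mulr1 mulrCA divff ?mulr1 // gt_eqF.
pose y g := t ^+ w g.
have y_gt0 g : 0 < y g := exprn_gt0 _ t_gt0.
have y_ge0 g : 0 <= y g := ltW (y_gt0 g).
have lo1 : omega B1 * t ^+ M <= Zsum omega y (fun S => (e \in S) && (f \in S)).
  by rewrite -prod_exp_weight; apply: Zsum_ge_term => //; rewrite eB1 fB1.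
have lo2 : omega B2 * t ^+ M <= Zsum omega y (fun S => e \notin S).
  by rewrite /M -B2_top -prod_exp_weight; apply: Zsum_ge_term.
have hi1 : t ^+ 0 * Zsum omega y (fun S => e \in S) <= W * t ^+ M.
  by apply: Zsum_exp_le => // S _ /le_top; rewrite addn0.
have hi2 : t ^+ 1 * Zsum omega y (fun S => (f \in S) && (e \notin S)) <= W * t ^+ M.
  by apply: Zsum_exp_le => // S /andP[fS eS] S_gt0; rewrite addn1 lt_top.
move: lo1 lo2 hi1 hi2 (Rayleigh_correlation nef y_gt0); rewrite expr0 mul1r expr1.
set A := Zsum _ _ _; set B := Zsum _ _ _; set C := Zsum _ _ _; set D := Zsum _ _ _.
move=> lo1 lo2 hi1 hi2 corr; set u := t ^+ M in lo1 lo2 hi1 hi2.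
have u_gt0 : 0 < u := exprn_gt0 _ t_gt0.
have AB : p * (u * u) <= A * B.
  rewrite mulrACA; apply: ler_pM lo1 lo2; exact/mulr_ge0/ltW.
have CD : C * (t * D) <= W * u * (W * u).
  by apply: ler_pM hi1 hi2; rewrite ?mulr_ge0 ?Zsum_ge0 ?(ltW t_gt0).
have : p * t * (u * u) <= W ^+ 2 * (u * u).
  rewrite mulrAC; apply: le_trans (ler_wpM2r (ltW t_gt0) AB) _.
  apply: le_trans (ler_wpM2r (ltW t_gt0) corr) _.
  by rewrite mulrAC -mulrA mulrACA -expr2.
rewrite ler_pM2r ?mulr_gt0 // pt; lra.
Qed.

Lemma Rayleigh_top_weight_exchange (w : E -> nat) (B1 B2 : {set E}) e f :
  e != f -> 0 < omega B1 -> 0 < omega B2 -> e \in B1 -> f \in B1 -> e \notin B2 ->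
  (forall S, 0 < omega S -> (weight w S <= weight w B1)%nat) ->
  weight w B2 = weight w B1 ->
  exists S, [/\ 0 < omega S, f \in S, e \notin S & weight w S = weight w B1].
Proof.
move=> nef B1_gt0 B2_gt0 eB1 fB1 eB2 le_top B2_top.
have [/existsP[S /and4P[S_gt0 fS eS /eqP top]]|none] :=
  boolP [exists S, [&& 0 < omega S, f \in S, e \notin S & weight w S == weight w B1]].
  by exists S.
case: (Rayleigh_top_weight_contra nef B1_gt0 B2_gt0 eB1 fB1 eB2 le_top B2_top).
move=> S S_gt0 fS eS; rewrite ltn_neqAle le_top // andbT.
by apply: contra none => top; apply/existsP; exists S; rewrite S_gt0 fS eS.
Qed.

End RayleighInequalities.

Lemma sum_mem_card (E : finType) (A S : {set E}) :
  (\sum_(g in S) (g \in A) = #|S :&: A|)%nat.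
Proof.
rewrite -sum1_card [RHS]big_mkcond [LHS]big_mkcond /=.
by apply: eq_bigr => g _; rewrite inE; case: (g \in S).
Qed.

Lemma weight_indicators (E : finType) (U C S : {set E}) :
  weight (fun g => ((g \in U) + (g \in C))%nat) S = (#|S :&: U| + #|S :&: C|)%nat.
Proof. by rewrite /weight big_split /= !sum_mem_card. Qed.

Lemma card_setI_add_leqif (E : finType) (U C S : {set E}) :
  (#|S :&: U| + #|S :&: C| <= #|S| + #|C| ?= iff (S \subset U) && (C \subset S))%nat.
Proof.
rewrite -subsetIidl -[C \subset S]subsetIidl [S :&: C]setIC.
by apply: leqif_add; apply: subset_leqif_card; rewrite subsetIl.
Qed.

Lemma setD_eq1_exchange (E : finType) (B1 B2 : {set E}) x :
  #|B1| = #|B2| -> B1 :\: B2 = [set x] ->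
  exists2 y, y \in B2 :\: B1 & y |: (B1 :\ x) = B2.
Proof.
move=> eq_card D12.
have /cards1P[y D21] : #|B2 :\: B1| == 1%nat.
  by rewrite -(eqn_add2l #|B2 :&: B1|) cardsID setIC -eq_card -(cardsID B2) D12 cards1.
exists y; first by rewrite D21 set11.
apply/setP => g; move/setP/(_ g): D12; move/setP/(_ g): D21; rewrite !inE.
by case: (g \in B1); case: (g \in B2) => /= <- <-.
Qed.

Section Exchange.

Variables (E : finType) (Q : {set {set E}}) (omega : {set E} -> R).
Hypothesis Q_homogeneous : homogeneous Q.
Hypothesis omega_ge0 : forall S, 0 <= omega S.
Hypothesis omega_supp : forall S, 0 < omega S <-> S \in Q.
Hypothesis Rayleigh_Z : Rayleigh (Zpoly omega).

Lemma Rayleigh_exchange_step (B1 B2 : {set E}) x x' :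
  B1 \in Q -> B2 \in Q -> x \in B1 :\: B2 -> x' \in B1 :\: B2 -> x != x' ->
  exists2 S, S \in Q &
    [/\ S \subset B1 :|: B2, B1 :&: B2 \subset S, x \notin S & x' \in S].
Proof.
move=> B1Q B2Q /setDP[xB1 xB2] /setDP[x'B1 _] nxx'.
pose w g := ((g \in B1 :|: B2) + (g \in B1 :&: B2))%nat.
have top S : S \in Q -> (weight w S <= #|B1| + #|B1 :&: B2|
    ?= iff (S \subset B1 :|: B2) && (B1 :&: B2 \subset S))%nat.
  move=> SQ; rewrite weight_indicators (Q_homogeneous B1Q SQ).
  exact: card_setI_add_leqif.
have top_B1 : weight w B1 = (#|B1| + #|B1 :&: B2|)%nat.
  by apply/eqP; rewrite (top _ B1Q) subsetUl subsetIl.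
have top_B2 : weight w B2 = weight w B1.
  by rewrite top_B1; apply/eqP; rewrite (top _ B2Q) subsetUr subsetIr.
have le_top S : 0 < omega S -> (weight w S <= weight w B1)%nat.
  by move/omega_supp => SQ; rewrite top_B1 (top _ SQ).
have [S [/omega_supp SQ x'S xS /eqP]] := Rayleigh_top_weight_exchange omega_ge0 Rayleigh_Z
  nxx' ((omega_supp _).2 B1Q) ((omega_supp _).2 B2Q) xB1 x'B1 xB2 le_top top_B2.
by rewrite top_B1 (top _ SQ) => /andP[SU CS]; exists S.
Qed.

Lemma basis_exchange (B1 B2 : {set E}) x : B1 \in Q -> B2 \in Q -> x \in B1 :\: B2 ->
  exists2 y, y \in B2 :\: B1 & y |: (B1 :\ x) \in Q.
Proof.
move=> B1Q; have [n] := ubnP #|B1 :\: B2|; elim: n B2 => // n IH B2 lt_n B2Q xD.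
have [x' /andP[x'D nxx']|only_x] := pickP [pred x' | (x' \in B1 :\: B2) && (x != x')].
  have [S SQ [SU CS xS x'S]] := Rayleigh_exchange_step B1Q B2Q xD x'D nxx'.
  have lt_S : (#|B1 :\: S| < n)%nat.
    rewrite ltnS in lt_n; apply: leq_trans lt_n; apply/proper_card/properP.
    split; last first.
      by exists x'; rewrite // inE x'S.
    apply/subsetP => g /setDP[gB1 gS]; rewrite inE gB1 andbT.
    by apply: contra gS => gB2; apply/(subsetP CS); rewrite inE gB1.
  have xDS : x \in B1 :\: S by case/setDP: xD => xB1 _; rewrite inE xS.
  have [y /setDP[yS yB1] yQ] := IH S lt_S SQ xDS.
  exists y => //; rewrite inE yB1 /=.
  by have := subsetP SU y yS; rewrite inE (negPf yB1).
have D12 : B1 :\: B2 = [set x].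
  apply/setP => g; rewrite inE; apply/idP/eqP => [gD|-> //].
  by move: (only_x g); rewrite /= gD => /negbFE/eqP.
have [y yD eqB2] := setD_eq1_exchange (Q_homogeneous B1Q B2Q) D12.
by exists y; rewrite // eqB2.
Qed.

End Exchange.

Theorem corollary4p9 (E : finType) (Q : {set {set E}}) :
  homogeneous Q -> weakly_Rayleigh Q -> matroid_bases Q.
Proof.
move=> Q_homogeneous [omega [omega_ge0 [S0 nz_S0] omega_supp Rayleigh_Z]]; split.
  by apply/set0Pn; exists S0; apply/omega_supp; rewrite lt0r nz_S0 omega_ge0.
by move=> B1 B2 B1Q B2Q x; apply: basis_exchange.
Qed.
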